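(* Let $p,q$ be positive integers with $1<q<p-q$ and $\gcd(p,q)=1$, let $A=\langle q,p-q\rangle\subseteq\mathbb{Z}^+$, let $s\in A\setminus\{0\}$, and let $r$ be a positive integer with $1<r<s-r$ and $\gcd(r,s)=1$; put $B=\langle r,s-r\rangle$. Let $M$ be the submonoid of $\mathbb{Q}^+$ generated by all fractions $k/r$ with $k\in A$ and all fractions $\frac{k'}{r}\left(\frac{s}{r}\right)^n$ with $k'\in B$ and $n\ge 1$, and let $G=M+(-M)$ with positive cone $G^+=M$. For $n\ge1$ let $e_n=(s/r)^n$. Then the set $D=\{x\in G^+ : x\le_G e_n \text{ for some } n\}$ is an interval in $G^+$, $D\neq G^+$, and $rD=G^+$.
   Context: $\langle a_1,\dots,a_k\rangle$ denotes the submonoid of $\mathbb{Z}^+$ generated by $a_1,\dots,a_k$. For a partially ordered abelian group $(G,G^+)$, $x\le_G y$ means $y-x\in G^+$. An interval in $G^+$ is a nonempty subset $X\subseteq G^+$ which is upward directed (any two elements have a common upper bound in $X$) and order-hereditary ($0\le y\le x\in X$ implies $y\in X$). The sum of intervals is $X+Y=\{z\in G^+: z\le x+y\text{ for some }x\in X,y\in Y\}$, and for a positive integer $t$, $tX$ denotes the $t$-fold sum $X+\cdots+X$. *)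

(* G is realized as a subgroup of the rationals [rat]. *)
From mathcomp Require Import all_boot all_order all_algebra.
Set Implicit Arguments. Unset Strict Implicit. Unset Printing Implicit Defensive.
Import Order.TTheory GRing.Theory Num.Theory.
Local Open Scope ring_scope.

Definition in_monoid2 (a b k : nat) : Prop :=
  exists i j : nat, k = (i * a + j * b)%N.

Definition M_gen (p q r s : nat) (x : rat) : Prop :=
  (exists k : nat, in_monoid2 q (p - q) k /\ x = k%:R / r%:R) \/
  (exists (k' n : nat), in_monoid2 r (s - r) k' /\ (0 < n)%N /\
       x = k'%:R / r%:R * (s%:R / r%:R) ^+ n).

Inductive inM (p q r s : nat) : rat -> Prop :=
  | inM0 : inM p q r s 0
  | inM_add : forall x y, M_gen p q r s x -> inM p q r s y -> inM p q r s (x + y).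

Definition leG (P : rat -> Prop) (x y : rat) : Prop := P (y - x).

Definition is_interval (P X : rat -> Prop) : Prop :=
  (exists x, X x) /\
  (forall x, X x -> P x) /\
  (forall x y, X x -> X y -> exists z, X z /\ leG P x z /\ leG P y z) /\
  (forall x y, leG P 0 y -> leG P y x -> X x -> X y).

Definition int_sum (P X Y : rat -> Prop) (z : rat) : Prop :=
  P z /\ exists x y, X x /\ Y y /\ leG P z (x + y).

Fixpoint int_mul (P X : rat -> Prop) (t : nat) : rat -> Prop :=
  match t with
  | 0%N => X
  | 1%N => X
  | t'.+1 => int_sum P X (int_mul P X t')
  end.

From mathcomp Require Import all_boot all_order all_algebra.
From mathcomp Require Import ring zify.
Import Order.TTheory GRing.Theory Num.Theory.
Local Open Scope ring_scope.

(* Write e_n = (s/r)^n.  In G one has e_n <= e_(n+1), the difference being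
   the generator ((s-r)/r) e_n, so D is an interval with cofinal family e_n.
   Since r e_N + r e_N <= r e_(N+1), every generator and hence every element
   of M lies below some r e_N, which belongs to rD: thus rD = G^+.  Finally
   s = rs/r is in M but s <= e_n fails for every n: reading a decomposition
   of e_(n+2) - s into generators modulo r^-(n+1) Z, the coprimality of r and
   s forces the generators with denominator r^(n+2) to add up to
   (s-r) s^(n+1) / r^(n+2), and the remaining generators add up to
   e_(n+1) - s; descending to e_1 - s < 0 gives a contradiction. *)

Lemma in_monoid2_0 a b : in_monoid2 a b 0.
Proof. by exists 0%N, 0%N. Qed.

Lemma in_monoid2l a b : in_monoid2 a b a.
Proof. by exists 1%N, 0%N; lia. Qed.

Lemma in_monoid2r a b : in_monoid2 a b b.
Proof. by exists 0%N, 1%N; lia. Qed.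

Lemma in_monoid2D a b x y :
  in_monoid2 a b x -> in_monoid2 a b y -> in_monoid2 a b (x + y).
Proof. by move=> [i [j ->]] [i' [j' ->]]; exists (i + i')%N, (j + j')%N; lia. Qed.

Lemma in_monoid2_mull a b c x : in_monoid2 a b x -> in_monoid2 a b (c * x).
Proof. by move=> [i [j ->]]; exists (c * i)%N, (c * j)%N; lia. Qed.

Lemma in_monoid2_ge a b k :
  (a <= b)%N -> in_monoid2 a b k -> k != 0%N -> (a <= k)%N.
Proof. by move=> ab [[|i] [[|j] ->]]; nia. Qed.

Lemma in_monoid2_dvd_sub r s b : (1 < r)%N -> (r < s - r)%N -> coprime r s ->
  in_monoid2 r (s - r) b -> (b < s)%N -> (r %| s - b)%N -> b = (s - r)%N.
Proof.
move=> r_gt1 r_lt rs_coprime [i [[|[|j]] ->]] b_lt; last by nia.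
- rewrite mul0n addn0 => /(dvdn_add (dvdn_mull i (dvdnn r))).
  rewrite addnC subnK => [r_dvd_s|]; last by lia.
  by move: (coprime_dvdr r_dvd_s rs_coprime); rewrite /coprime gcdnn => /eqP; lia.
- have : (i * r < 1 * r)%N by lia.
  by rewrite ltn_pmul2r ?ltnS ?leqn0 => [/eqP ->|]; lia.
Qed.

Lemma power_decomp_coef {r s b n K} : (1 < r)%N -> (r < s - r)%N -> coprime r s ->
  in_monoid2 r (s - r) b ->
  (s ^ n.+1 = s * r ^ n.+1 + b * s ^ n + K * r)%N -> b = (s - r)%N.
Proof.
move=> r_gt1 r_lt rs_coprime b_in E.
have sn_gt0 : (0 < s ^ n)%N by rewrite expn_gt0; lia.
have rn_gt0 : (0 < r ^ n.+1)%N by rewrite expn_gt0; lia.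
have b_lt : (b < s)%N by rewrite -(ltn_pmul2r sn_gt0) -expnS E; nia.
apply: in_monoid2_dvd_sub => //.
rewrite -(Gauss_dvdr _ (coprimeXr n rs_coprime)) mulnBr -expnSr E.
by apply/dvdnP; exists (s * r ^ n + K)%N; rewrite expnS; nia.
Qed.

Section Cone.
Variables p q r s : nat.
Local Notation M := (inM p q r s).
Local Notation R := (r%:R : rat).
Local Notation S := (s%:R : rat).
Local Notation e n := ((S / R) ^+ n).

Lemma inMD x y : M x -> M y -> M (x + y).
Proof.
elim=> [|x1 y1 gen_x1 _ IH] My; first by rewrite add0r.
by rewrite -addrA; apply: inM_add gen_x1 (IH My).
Qed.

Lemma inM_gen x : M_gen p q r s x -> M x.
Proof. by move=> gen_x; rewrite -[x]addr0; apply: inM_add gen_x (inM0 _ _ _ _). Qed.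

Lemma M_gen_ge0 x : M_gen p q r s x -> 0 <= x.
Proof.
case=> [[k [_ ->]] | [k [n [_ [_ ->]]]]]; first by rewrite divr_ge0.
by rewrite mulr_ge0 ?exprn_ge0 ?divr_ge0.
Qed.

Lemma inM_ge0 x : M x -> 0 <= x.
Proof. by elim=> // x1 y1 /M_gen_ge0 x1_ge0 _ y1_ge0; rewrite addr_ge0. Qed.

Lemma inM_natrM c x : M x -> M (c%:R * x).
Proof.
move=> Mx; elim: c => [|c IH]; first by rewrite mul0r; apply: inM0.
by rewrite mulrSr mulrDl mul1r; apply: inMD.
Qed.

Lemma inM_A k : in_monoid2 q (p - q) k -> M (k%:R / R).
Proof. by move=> k_in; apply: inM_gen; left; exists k. Qed.

Lemma inM_B k n : in_monoid2 r (s - r) k -> (0 < n)%N -> M (k%:R / R * e n).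
Proof. by move=> k_in n_gt0; apply: inM_gen; right; exists k, n. Qed.

Lemma leM_refl x : leG M x x.
Proof. by rewrite /leG subrr; apply: inM0. Qed.

Lemma leM_trans y x z : leG M x y -> leG M y z -> leG M x z.
Proof. by rewrite /leG => xy yz; rewrite -[z - x](subrKA y) addrC; apply: inMD. Qed.

Lemma leMD x y x' y' : leG M x x' -> leG M y y' -> leG M (x + y) (x' + y').
Proof. by rewrite /leG opprD addrACA; apply: inMD. Qed.

Hypothesis r_gt1 : (1 < r)%N.
Hypothesis r_lt : (r < s - r)%N.

Let r_gt0 : (0 < r)%N. Proof. lia. Qed.
Let R_neq0 : R != 0. Proof. by rewrite pnatr_eq0 -lt0n. Qed.

Lemma e_in n : (0 < n)%N -> M (e n).
Proof.
move=> n_gt0; have -> : e n = R / R * e n by rewrite divff ?mul1r.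
exact: inM_B (in_monoid2l _ _) n_gt0.
Qed.

Lemma Re_in n : (0 < n)%N -> M (R * e n).
Proof. by move=> n_gt0; apply: inM_natrM; apply: e_in. Qed.

Lemma e_leM_succ n : (0 < n)%N -> leG M (e n) (e n.+1).
Proof.
rewrite /leG => n_gt0; have -> : e n.+1 - e n = (s - r)%:R / R * e n.
  by rewrite exprS natrB; [field | lia].
exact: inM_B (in_monoid2r _ _) n_gt0.
Qed.

Lemma e_leM n m : (0 < n)%N -> (n <= m)%N -> leG M (e n) (e m).
Proof.
move=> n_gt0 /subnK <-; elim: (m - n)%N => [|k IH]; first exact: leM_refl.
by apply: leM_trans IH _; rewrite addSn; apply: e_leM_succ; lia.
Qed.

Lemma Re_leM n m : (0 < n)%N -> (n <= m)%N -> leG M (R * e n) (R * e m).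
Proof. by move=> n_gt0 nm; rewrite /leG -mulrBr; apply/inM_natrM/e_leM. Qed.

Lemma Re_double n : (0 < n)%N -> leG M (R * e n + R * e n) (R * e n.+1).
Proof.
rewrite /leG => n_gt0.
have -> : R * e n.+1 - (R * e n + R * e n) = (r * (s - 2 * r))%:R / R * e n.
  by rewrite exprS natrM natrB ?natrM; [field | lia].
by apply: inM_B n_gt0; rewrite mulnC; apply/in_monoid2_mull/in_monoid2l.
Qed.

Definition dominated x := exists2 N, (0 < N)%N & leG M x (R * e N).

Lemma dominated_leM {y x} : dominated y -> leG M x y -> dominated x.
Proof. by move=> [N N_gt0 yN] xy; exists N => //; apply: leM_trans xy yN. Qed.

Lemma dominatedD x y : dominated x -> dominated y -> dominated (x + y).
Proof.
move=> [N1 N1_gt0 xN1] [N2 N2_gt0 yN2]; set N := maxn N1 N2.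
have N_gt0 : (0 < N)%N by rewrite leq_max N1_gt0.
exists N.+1 => //; apply: (leM_trans (R * e N + R * e N)); last exact: Re_double.
by apply: leMD; [apply: leM_trans xN1 _ | apply: leM_trans yN2 _];
  apply: Re_leM; rewrite ?leq_maxl ?leq_maxr.
Qed.

Lemma dominated_natrM c n : (0 < n)%N -> dominated (c%:R * (R * e n)).
Proof.
move=> n_gt0; have Re_dom : dominated (R * e n) by exists n => //; apply: leM_refl.
elim: c => [|c IH].
  by rewrite mul0r; apply: (dominated_leM Re_dom); rewrite /leG subr0; apply: Re_in.
by rewrite mulrSr mulrDl mul1r; apply: dominatedD.
Qed.

Lemma dominated_gen x : M_gen p q r s x -> dominated x.
Proof.
case=> [[k [k_in ->]] | [k [n [k_in [n_gt0 ->]]]]].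
  apply: (dominated_leM (dominated_natrM k 1 isT)); rewrite /leG.
  have -> : k%:R * (R * e 1) - k%:R / R = (k * (r * s - 1))%:R / R.
    by rewrite natrM natrB ?natrM; [field | nia].
  by apply: inM_A; rewrite mulnC; apply: in_monoid2_mull.
apply: (dominated_leM (dominated_natrM k n n_gt0)); rewrite /leG.
have -> : k%:R * (R * e n) - k%:R / R * e n = (k * (r * r - 1))%:R / R * e n.
  by rewrite natrM natrB ?natrM; [field | nia].
by apply: inM_B n_gt0; rewrite mulnC; apply: in_monoid2_mull.
Qed.

Lemma dominated_M x : M x -> dominated x.
Proof.
elim=> [|x1 y1 /dominated_gen x1_dom _ y1_dom]; last exact: dominatedD.
by apply: (dominated_leM (dominated_natrM 0 1 isT)); rewrite mul0r; apply: leM_refl.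
Qed.

Hypothesis rs_coprime : coprime r s.

(* Generators from A, and those k/r (s/r)^j with j <= n, lie in r^-(n+1) Z,
   while those with j >= n+2 are 0 or at least e_(n+2). *)
Definition level_decomp n m :=
  e n.+2 <= m \/
  exists b K m', [/\ in_monoid2 r (s - r) b, M m', m' * R ^+ n.+1 = K%:R
                   & m = b%:R * S ^+ n.+1 / R ^+ n.+2 + m'].

Lemma level_decomp0 n : level_decomp n 0.
Proof.
right; exists 0%N, 0%N, 0; split; [exact: in_monoid2_0 | exact: inM0 | |].
  by rewrite mul0r.
by rewrite !mul0r addr0.
Qed.

Lemma level_decomp_gen n x : M_gen p q r s x -> level_decomp n x.
Proof.
have RX_neq0 k : R ^+ k != 0 by apply: expf_neq0.
case=> [[k [k_in ->]] | [k [j [k_in [j_gt0 ->]]]]].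
  right; exists 0%N, (k * r ^ n)%N, (k%:R / R); split; first exact: in_monoid2_0.
  - exact: inM_A.
  - by rewrite natrM natrX exprS; field.
  - by rewrite !mul0r add0r.
case: (ltngtP j n.+1) => [j_lt | j_gt | ->].
- right; exists 0%N, (k * s ^ j * r ^ (n - j))%N, (k%:R / R * e j).
  split; [exact: in_monoid2_0 | exact: inM_B | | by rewrite !mul0r add0r].
  have -> : R ^+ n.+1 = R ^+ j * R ^+ (n - j) * R.
    by rewrite -exprD -exprSr; congr (_ ^+ _); lia.
  by rewrite !natrM !natrX expr_div_n; field; rewrite R_neq0 RX_neq0.
- have [->|k_neq0] := eqVneq k 0%N; first by rewrite !mul0r; apply: level_decomp0.
  have SR_ge1 : 1 <= S / R by rewrite ler_pdivlMr ?ltr0n // mul1r ler_nat; lia.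
  left; have e_le : e n.+2 <= e j by apply: ler_weXn2l; lia.
  apply: (le_trans e_le).
  rewrite ler_peMl ?exprn_ge0 ?divr_ge0 // ler_pdivlMr ?ltr0n // mul1r ler_nat.
  by apply: in_monoid2_ge k_in k_neq0; lia.
- right; exists k, 0%N, 0; split; [by [] | exact: inM0 | by rewrite mul0r |].
  by rewrite addr0 expr_div_n [R ^+ n.+2]exprS; field; rewrite R_neq0 RX_neq0.
Qed.

Lemma level_decompD n x y : M x -> M y ->
  level_decomp n x -> level_decomp n y -> level_decomp n (x + y).
Proof.
move=> Mx My [x_ge | [b1 [K1 [m1 [b1_in Mm1 m1_int x_def]]]]].
  by move=> _; left; apply: (le_trans x_ge); rewrite lerDl; apply: inM_ge0.
case=> [y_ge | [b2 [K2 [m2 [b2_in Mm2 m2_int y_def]]]]].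
  by left; apply: (le_trans y_ge); rewrite lerDr; apply: inM_ge0.
right; exists (b1 + b2)%N, (K1 + K2)%N, (m1 + m2); split.
- exact: in_monoid2D.
- exact: inMD.
- by rewrite mulrDl m1_int m2_int natrD.
- by rewrite x_def y_def natrD; ring.
Qed.

Lemma level_decomp_M n x : M x -> level_decomp n x.
Proof.
elim=> [|x1 y1 gen_x1 My1 IH]; first exact: level_decomp0.
by apply: level_decompD => //; [apply: inM_gen | apply: level_decomp_gen].
Qed.

Lemma e_sub_s_descent n : M (e n.+2 - S) -> M (e n.+1 - S).
Proof.
have RX_neq0 k : R ^+ k != 0 by apply: expf_neq0.
move=> /(level_decomp_M n) [e_le | [b [K [m' [b_in Mm' m'_int m_def]]]]].
  by move: e_le; rewrite lerDl oppr_ge0 lern0; lia.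
have m'_def : m' = e n.+2 - S - b%:R * S ^+ n.+1 / R ^+ n.+2 by rewrite m_def; ring.
(* clearing denominators yields an identity in nat that pins down b *)
have digits : (s ^ n.+2 = s * r ^ n.+2 + b * s ^ n.+1 + K * r)%N.
  apply/eqP; rewrite -(eqr_nat rat) !(natrX, natrD, natrM) -m'_int m'_def.
  by apply/eqP; rewrite expr_div_n !exprS; field; rewrite R_neq0 RX_neq0.
have b_eq := power_decomp_coef r_gt1 r_lt rs_coprime b_in digits.
suff -> : e n.+1 - S = m' by [].
by rewrite m'_def b_eq natrB ?expr_div_n ?exprS; [field; rewrite R_neq0 RX_neq0 | lia].
Qed.

Lemma s_not_leM_e n : (0 < n)%N -> ~ leG M S (e n).
Proof.
rewrite /leG; elim: n => [|[|n] IH] // _; last by move/e_sub_s_descent; apply: IH.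
move/inM_ge0; rewrite expr1 subr_ge0 ler_pdivlMr ?ltr0n // ger_pMr ?ltr0n ?lern1; lia.
Qed.

Definition below_e x := M x /\ exists n, (0 < n)%N /\ leG M x (e n).

Lemma below_e_e n : (0 < n)%N -> below_e (e n).
Proof. by move=> n_gt0; split; [apply: e_in | exists n; split; last apply: leM_refl]. Qed.

Lemma below_e_interval : is_interval M below_e.
Proof.
split; first by exists (e 1); apply: below_e_e.
split; first by move=> x [].
split=> [x y [_ [n [n_gt0 xn]]] [_ [m [m_gt0 ym]]] | x y].
  exists (e (n + m)); split; first by apply: below_e_e; lia.
  by split; [apply: leM_trans xn _ | apply: leM_trans ym _]; apply: e_leM; lia.
rewrite /leG subr0 => My yx [_ [n [n_gt0 xn]]]; split=> //.
by exists n; split=> //; apply: leM_trans yx xn.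
Qed.

Lemma below_e_proper : in_monoid2 q (p - q) s -> ~ (forall x, below_e x <-> M x).
Proof.
move=> s_in_A below_e_full.
have [_ [n [n_gt0 s_le]]] : below_e S.
  apply/below_e_full; have -> : S = (r * s)%:R / R by rewrite natrM; field.
  by apply: inM_A; apply: in_monoid2_mull.
exact: s_not_leM_e n_gt0 s_le.
Qed.

Lemma int_mul_below_e t N y :
  (0 < N)%N -> M y -> leG M y (t.+1%:R * e N) -> int_mul M below_e t.+1 y.
Proof.
move=> N_gt0; elim: t y => [|t IH] y My y_le.
  by split=> //; exists N; split=> //; rewrite mul1r in y_le.
split=> //; exists (e N), (t.+1%:R * e N).
split; first exact: below_e_e.
split; first by apply: IH; [apply/inM_natrM/e_in | apply: leM_refl].
by rewrite [t.+2%:R]mulrS mulrDl mul1r in y_le.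
Qed.

Lemma int_mul_below_e_M x : M x -> int_mul M below_e r x.
Proof.
move=> Mx; have [N N_gt0 x_le] := dominated_M _ Mx.
by have := int_mul_below_e r.-1 N x N_gt0 Mx; rewrite prednK //; apply.
Qed.

End Cone.

Lemma int_mul_sub P X t x : (forall y, X y -> P y) -> int_mul P X t x -> P x.
Proof. by case: t => [|[|t]] XP //=; [apply: XP | apply: XP | case]. Qed.

Theorem lemma2p2 (p q r s : nat) :
  (1 < q)%N -> (q < p - q)%N -> coprime p q ->
  in_monoid2 q (p - q) s -> s <> 0%N ->
  (1 < r)%N -> (r < s - r)%N -> coprime r s ->
  let M := inM p q r s in
  let e := fun n : nat => ((s%:R / r%:R : rat) ^+ n) in
  let D := fun x : rat => M x /\ exists n : nat, (0 < n)%N /\ leG M x (e n) in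
  is_interval M D /\
  ~ (forall x, D x <-> M x) /\
  (forall x, int_mul M D r x <-> M x).
Proof.
move=> _ _ _ s_in_A _ r_gt1 r_lt rs_coprime M e D.
split; first exact: below_e_interval.
split; first exact: below_e_proper.
move=> x; split; first by apply: int_mul_sub => y [].
exact: int_mul_below_e_M.
Qed.
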